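(* Let $\tilde E=E_\Delta\uplus F$ be the topological union of two disjoint Radon spaces $E_\Delta$ and $F$, and let $X$ be a right process on $\tilde E$ such that $F$ is an absorbing set for $X$. Define $\psi:\tilde E\to E_\Delta$ by $\psi(x)=x$ for $x\in E_\Delta$ and $\psi(x)=\Delta$ for $x\in F$. Then $\psi(X)$ is a right process on $E_\Delta$.
   Context: Right processes are in the sense of Sharpe (General Theory of Markov Processes); $E_\Delta=E\cup\{\Delta\}$ is a state space with adjoined cemetery point $\Delta$. A set $F$ is absorbing for $X$ if $\mathbb P_x(X_t\in F\text{ for all }t\ge0)=1$ for all $x\in F$. *)

From HB Require Import structures.
From mathcomp Require Import all_boot all_order all_algebra.
From mathcomp Require Import all_classical all_reals all_analysis.
From mathcomp Require Import measurable_realfun.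
Set Implicit Arguments. Unset Strict Implicit. Unset Printing Implicit Defensive.
Import Order.TTheory GRing.Theory Num.Theory.
Local Open Scope classical_set_scope.
Local Open Scope ring_scope.

Definition borel_sets (T : topologicalType) : set (set T) := <<s open >>.

Definition borel_probability (R : realType) (T : topologicalType)
    (mu : set T -> \bar R) : Prop :=
  [/\ mu set0 = 0%E, mu setT = 1%E,
      (forall A, borel_sets A -> (0 <= mu A)%E) &
      (forall U : nat -> set T, (forall n, borel_sets (U n)) -> trivIset setT U ->
         (fun n => \sum_(0 <= k < n) mu (U k))%E @ \oo --> mu (\bigcup_n U n))].

(* A is universally measurable: it is measurable for the completion of  *)
(* every Borel probability measure on T.                                 *)
Definition universally_measurable (R : realType) (T : topologicalType)
    (A : set T) : Prop :=
  forall mu : set T -> \bar R, borel_probability mu ->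
    exists B1 B2 : set T, [/\ borel_sets B1, borel_sets B2, B1 `<=` A, A `<=` B2 &
                              mu (B2 `\` B1) = 0%E].

Definition umeas_fun (R : realType) (T : topologicalType) (f : T -> R) : Prop :=
  forall B : set R, measurable B -> universally_measurable R (f @^-1` B).

Definition umeas_efun (R : realType) (T : topologicalType) (f : T -> \bar R) : Prop :=
  forall B : set (\bar R), measurable B -> universally_measurable R (f @^-1` B).

(* Radon space: homeomorphic to a universally measurable subset of a     *)
(* compact metric space.                                                 *)
Definition radon_space (R : realType) (T : topologicalType) : Prop :=
  exists (K : pseudoMetricType R) (h : T -> K),
    [/\ compact [set: K], hausdorff_space K, injective h,
        (forall U : set T, open U <-> exists V : set K, open V /\ U = h @^-1` V) &
        universally_measurable R (range h)].

Definition tsumfam (E F : topologicalType) (b : bool) : topologicalType :=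
  if b then E else F.

Definition tunion (E F : topologicalType) : topologicalType :=
  {b : bool & tsumfam E F b}.

Definition inl_t (E F : topologicalType) (x : E) : tunion E F :=
  existT (tsumfam E F) true x.

Definition inr_t (E F : topologicalType) (y : F) : tunion E F :=
  existT (tsumfam E F) false y.

Definition Fpart (E F : topologicalType) : set (tunion E F) :=
  [set z | projT1 z = false].

Definition tpsi (E F : topologicalType) (D : E) (z : tunion E F) : E :=
  match z with
  | existT b x => (if b return tsumfam E F b -> E then fun x => x else fun _ => D) x
  end.

(* Right processes (Sharpe, General Theory of Markov Processes)        *)

Section process.
Context (R : realType) (S : topologicalType) (d : measure_display)
  (Om : measurableType d).

Definition semigroup (X : R -> Om -> S) (P : S -> probability Om R)
    (t : R) (f : S -> \bar R) (y : S) : \bar R :=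
  (\int[P y]_w f (X t w))%E.

Definition absorbing (X : R -> Om -> S) (P : S -> probability Om R)
    (A : set S) : Prop :=
  forall x, A x -> {ae P x, forall w, forall t, 0 <= t -> A (X t w)}.

Definition excessive (X : R -> Om -> S) (P : S -> probability Om R)
    (alpha : R) (f : S -> \bar R) : Prop :=
  [/\ (forall y, (0 <= f y)%E), umeas_efun f,
      (forall t y, 0 <= t -> ((expR (- (alpha * t)))%:E * semigroup X P t f y <= f y)%E) &
      (forall y, ((expR (- (alpha * t)))%:E * semigroup X P t f y)%E @[t --> 0^'+]
                 --> f y)].

Definition bounded_fun (f : S -> R) : Prop := exists M : R, forall y, `|f y| <= M.

Definition right_process (D : S) (G : R -> set (set Om)) (X : R -> Om -> S)
    (th : R -> Om -> Om) (P : S -> probability Om R) : Prop :=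
  radon_space R S /\
      (forall t, 0 <= t -> sigma_algebra setT (G t) /\ G t `<=` measurable)
      /\ (forall s t, 0 <= s -> s <= t -> G s `<=` G t) /\
      (forall t, 0 <= t -> forall A, universally_measurable R A -> G t (X t @^-1` A)) /\
      (forall w t, 0 <= t -> X s w @[s --> t^'+] --> X t w) /\
      (forall t s w, 0 <= t -> 0 <= s -> X s (th t w) = X (s + t) w) /\
      (forall H, measurable H -> umeas_fun (fun x => fine (P x H))) /\
      (forall x, {ae P x, forall w, X 0 w = x}) /\
      absorbing X P [set D] /\
      (forall x s t (f : S -> R), 0 <= s -> 0 <= t -> umeas_fun f -> bounded_fun f ->
         forall H, G t H ->
         (\int[P x]_(w in H) (f (X (t + s) w))%:E =
          \int[P x]_(w in H) semigroup X P s (fun y => (f y)%:E) (X t w))%E) /\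
      (forall alpha f, 0 < alpha -> excessive X P alpha f ->
         forall x, {ae P x, forall w, forall t, 0 <= t ->
                      f (X s w) @[s --> t^'+] --> f (X t w)}).

End process.

From Pilot Require Import Defs.
From HB Require Import structures.
From mathcomp Require Import all_boot all_order all_algebra.
From mathcomp Require Import all_classical all_reals all_analysis.
From mathcomp Require Import measurable_realfun.
Set Implicit Arguments. Unset Strict Implicit. Unset Printing Implicit Defensive.
Local Open Scope classical_set_scope.
Local Open Scope ring_scope.

(* The map psi is continuous, so it preserves universal measurability under
   preimages: adaptedness, right continuity, measurability of x |-> P^x(H),
   normality and the shift identity pass to psi(X) directly.  The only real
   point is the semigroup: started in F, X stays in F, and started at Delta
   it stays at Delta, so in both cases psi(X) is a.s. constantly Delta.
   Hence P_s (g o psi) = Q_s g o psi, which transports the Markov property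
   and turns alpha-excessive functions of psi(X) into alpha-excessive
   functions of X, to which hypothesis HD2 of X applies. *)

Section continuous_preimage.
Variables (R : realType) (T U : topologicalType) (h : T -> U).
Hypothesis h_cont : continuous h.

Lemma borel_sets_preimage B : borel_sets B -> borel_sets (h @^-1` B).
Proof.
move=> borelB.
suff : image_set_system setT h (@borel_sets T) B.
  by rewrite /image_set_system /= setTI.
apply: (smallest_sub _ _ borelB).
  exact/sigma_algebra_image/smallest_sigma_algebra.
move=> V oV; rewrite /image_set_system /= setTI; apply: sub_sigma_algebra.
by apply: open_comp => // x _; apply: h_cont.
Qed.

Lemma universally_measurable_preimage A :
  universally_measurable R A -> universally_measurable R (h @^-1` A).
Proof.
move=> umA mu [mu0 mu1 mu_ge0 mu_sigma].
have push_prob : borel_probability (fun B => mu (h @^-1` B)).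
  split; [by rewrite preimage_set0 | by rewrite preimage_setT | |].
  - by move=> B /borel_sets_preimage; apply: mu_ge0.
  - move=> V borelV trivV; rewrite preimage_bigcup; apply: mu_sigma.
      by move=> n; apply: borel_sets_preimage.
    by move=> i j _ _ [x [Vi Vj]]; apply: trivV => //; exists (h x).
have [B1 [B2 [borelB1 borelB2 B1A AB2 null]]] := umA _ push_prob.
exists (h @^-1` B1), (h @^-1` B2).
split; [exact: borel_sets_preimage | exact: borel_sets_preimage | | | exact: null].
- by move=> x /B1A.
- by move=> x /AB2.
Qed.

Lemma umeas_fun_comp (f : U -> R) : umeas_fun f -> umeas_fun (fun x => f (h x)).
Proof. by move=> umf B mB; apply: universally_measurable_preimage (umf B mB). Qed.

Lemma umeas_efun_comp (f : U -> \bar R) : umeas_efun f -> umeas_efun (fun x => f (h x)).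
Proof. by move=> umf B mB; apply: universally_measurable_preimage (umf B mB). Qed.

End continuous_preimage.

Lemma umeas_efun_EFin (R : realType) (T : topologicalType) (f : T -> R) :
  umeas_fun f -> umeas_efun (EFin \o f).
Proof.
move=> umf B mB; have := EFin_measurable measurableT mB.
by rewrite setTI => /umf.
Qed.

Lemma integral_ae_cst (R : realType) d (Om : measurableType d)
    (mu : probability Om R) (g : Om -> \bar R) c :
  measurable_fun setT g -> {ae mu, forall w, g w = c} -> (\int[mu]_w g w = c)%E.
Proof.
move=> mg g_ae; rewrite (@ae_eq_integral _ _ _ mu setT (cst c)) //.
  by rewrite integral_cst // -[RHS]mule1; congr (_ * _)%E; apply: probability_setT.
by apply: filterS g_ae => w -> _.
Qed.

Lemma tpsi_continuous (E F : topologicalType) (D : E) : continuous (@tpsi E F D).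
Proof.
move=> [[] x] U /= psiU; first exact: psiU.
have UD := nbhs_singleton psiU.
by rewrite /nbhs /= sigT_nbhsE; apply: nearW.
Qed.

Lemma inl_t_continuous (E F : topologicalType) : continuous (@inl_t E F).
Proof. by move=> x; apply: (@existT_continuous _ (tsumfam E F) true x). Qed.

Section psi_process.
Variables (R : realType) (E F : topologicalType) (D : E).
Variables (d : measure_display) (Om : measurableType d) (G : R -> set (set Om)).
Variables (X : R -> Om -> tunion E F) (P : tunion E F -> probability Om R).

Hypothesis G_sub_measurable : forall t, 0 <= t -> G t `<=` measurable.
Hypothesis X_adapted : forall t, 0 <= t ->
  forall A, universally_measurable R A -> G t (X t @^-1` A).
Hypothesis cemetery_absorbing : absorbing X P [set inl_t F D].
Hypothesis Fpart_absorbing : absorbing X P (@Fpart E F).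

Lemma measurable_umeas_efun_comp_X s (g : tunion E F -> \bar R) :
  0 <= s -> umeas_efun g -> measurable_fun setT (g \o X s).
Proof.
move=> s_ge0 umg _ B mB; rewrite setTI.
exact: G_sub_measurable s_ge0 _ (X_adapted s_ge0 (umg B mB)).
Qed.

Lemma tpsi_X_ae_cemetery s z : 0 <= s -> tpsi D z = D ->
  {ae P z, forall w, tpsi D (X s w) = D}.
Proof.
move=> s_ge0; case: z => -[] x /= psi_z.
  rewrite psi_z; apply: filterS (@cemetery_absorbing (inl_t F D) erefl).
  by move=> w /(_ s s_ge0); rewrite /set1 /= => ->.
apply: filterS (@Fpart_absorbing (inr_t E x) erefl) => w /(_ s s_ge0).
by case: (X s w) => -[].
Qed.

Lemma semigroup_comp_tpsi s (g : E -> \bar R) z : 0 <= s -> umeas_efun g ->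
  semigroup X P s (fun y => g (tpsi D y)) z =
  semigroup (fun t w => tpsi D (X t w)) (fun x => P (inl_t F x)) s g (tpsi D z).
Proof.
move=> s_ge0 umg; case: z => -[] x //.
have mg := measurable_umeas_efun_comp_X s_ge0 (umeas_efun_comp (@tpsi_continuous E F D) umg).
rewrite /semigroup (integral_ae_cst (c := g D) mg); last first.
  by apply: filterS (tpsi_X_ae_cemetery (z := inr_t E x) s_ge0 erefl) => w /= ->.
rewrite (integral_ae_cst (c := g D) mg) //.
by apply: filterS (tpsi_X_ae_cemetery (z := inl_t F D) s_ge0 erefl) => w /= ->.
Qed.

Lemma markov_comp_tpsi :
  (forall x s t (f : tunion E F -> R), 0 <= s -> 0 <= t -> umeas_fun f ->
     Defs.bounded_fun f -> forall H, G t H ->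
     (\int[P x]_(w in H) (f (X (t + s) w))%:E =
      \int[P x]_(w in H) semigroup X P s (fun y => (f y)%:E) (X t w))%E) ->
  forall x s t (f : E -> R), 0 <= s -> 0 <= t -> umeas_fun f ->
     Defs.bounded_fun f -> forall H, G t H ->
     (\int[P (inl_t F x)]_(w in H) (f (tpsi D (X (t + s) w)))%:E =
      \int[P (inl_t F x)]_(w in H) semigroup (fun t w => tpsi D (X t w))
        (fun x => P (inl_t F x)) s (fun y => (f y)%:E) (tpsi D (X t w)))%E.
Proof.
move=> markovX x s t f s_ge0 t_ge0 umf [M f_le] H GtH.
rewrite (markovX _ _ _ (fun y => f (tpsi D y)) s_ge0 t_ge0) //; last first.
- by exists M => y; apply: f_le.
- exact: (umeas_fun_comp (@tpsi_continuous E F D)) umf.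
apply: eq_integral => w _.
exact: semigroup_comp_tpsi s_ge0 (umeas_efun_EFin umf).
Qed.

Lemma excessive_comp_tpsi alpha (f : E -> \bar R) :
  excessive (fun t w => tpsi D (X t w)) (fun x => P (inl_t F x)) alpha f ->
  excessive X P alpha (fun y => f (tpsi D y)).
Proof.
move=> [f_ge0 umf f_super f_lim].
have semigroupE s z (s_ge0 : 0 <= s) := semigroup_comp_tpsi z s_ge0 umf.
split => //.
- exact: (umeas_efun_comp (@tpsi_continuous E F D)) umf.
- by move=> t y t_ge0; rewrite semigroupE //; apply: f_super.
move=> y; apply: cvg_trans (f_lim (tpsi D y)); apply: near_eq_cvg.
by near=> t; rewrite semigroupE.
Unshelve. all: by end_near.
Qed.

End psi_process.

Theorem theoremA1 (R : realType) (E F : topologicalType) (D : E)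
  (d : measure_display) (Om : measurableType d) (G : R -> set (set Om))
  (X : R -> Om -> tunion E F) (th : R -> Om -> Om)
  (P : tunion E F -> probability Om R) :
  radon_space R E -> radon_space R F ->
  right_process (@inl_t E F D) G X th P ->
  absorbing X P (@Fpart E F) ->
  right_process D G (fun t w => tpsi D (X t w)) th (fun x => P (@inl_t E F x)).
Proof.
move=> radonE _ [_ [filt [G_mono [adapt [rc [shift [umP [norm [absD [markov hd2]]]]]]]]]] absF.
have G_meas t t_ge0 := (filt t t_ge0).2.
have psi_cont := @tpsi_continuous E F D.
split; [exact: radonE | split; [exact: filt | split; [exact: G_mono | split]]].
  by move=> t t_ge0 A /(universally_measurable_preimage psi_cont); apply: adapt.
split; [by move=> w t t_ge0; apply: continuous_cvg (psi_cont _) _; apply: rc |].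
split; [by move=> t s w t_ge0 s_ge0; rewrite shift |].
split; [by move=> H mH; exact: (umeas_fun_comp (@inl_t_continuous E F)) (umP H mH) |].
split; [by move=> x; apply: filterS (norm (inl_t F x)) => w -> |].
split.
  move=> x /= ->; apply: filterS (absD (inl_t F D) erefl) => w absw t t_ge0.
  by rewrite /set1 /= (absw t t_ge0).
split; first exact: markov_comp_tpsi G_meas adapt absD absF markov.
move=> alpha f alpha_gt0 /(excessive_comp_tpsi G_meas adapt absD absF) f_exc x.
exact: hd2 alpha_gt0 f_exc (inl_t F x).
Qed.
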